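(* Let $q\in\mathbb{K}$ be a primitive $\ell$-th root of unity with $\ell>1$ odd. For every $d\ge1$, the quantum Koszul complex $0\to K^0_d\xrightarrow{\kappa}K^1_d\xrightarrow{\kappa}\cdots\xrightarrow{\kappa}K^d_d\to0$, with $K^i_d=S^i_q\otimes\Lambda^{d-i}_q$, is exact.
   Context: Quantum polynomial functors: for $q\in\mathbb{K}^\times$, $\mathcal{H}_d$ is the Hecke algebra with generators $T_1,\dots,T_{d-1}$, relations $T_iT_j=T_jT_i$ ($|i-j|>1$), $T_iT_{i+1}T_i=T_{i+1}T_iT_{i+1}$, $(T_i-q)(T_i+q^{-1})=0$, basis $T_w$. $V_n=\mathbb{K}^n$ with basis $e_1,\dots,e_n$; $T_i$ acts on $V_n^{\otimes d}$ by $R_n$ in positions $i,i+1$, where $R_n(e_i\otimes e_j)=e_j\otimes e_i$ ($i<j$), $q\,e_i\otimes e_i$ ($i=j$), $(q-q^{-1})e_i\otimes e_j+e_j\otimes e_i$ ($i>j$). $\mathcal{P}^d_q$ is the category of $\mathbb{K}$-linear functors from the category with objects $V_n^{\otimes d}$ and $\mathcal{H}_d$-linear maps to finite-dimensional vector spaces, with $(F\otimes G)(n)=F(n)\otimes G(n)$. $S^*_q(n)$: algebra generated by $e_1,\dots,e_n$ with $e_je_i=qe_ie_j$ ($i<j$); $\Lambda^*_q(n)$: generated with $e_j\wedge e_i=-q^{-1}e_i\wedge e_j$ ($i<j$), $e_i\wedge e_i=0$; degree parts give functors $S^d_q,\Lambda^d_q$ with products $\mu$. The action of $\sum_\sigma(-q^{-1})^{l(\sigma)}T_\sigma$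 over $(i,j)$-shuffles on $I^{\otimes i+j}$ descends to $\Delta^{(i,j)}:\Lambda^{i+j}_q\to\Lambda^i_q\otimes\Lambda^j_q$. The Koszul differential $\kappa:K^i_d\to K^{i+1}_d$ is $(\mu\otimes1)\circ(1\otimes\Delta^{(1,d-i-1)})$, identifying $\Lambda^1_q=S^1_q=I$. *)

From HB Require Import structures.
From mathcomp Require Import all_boot all_order all_algebra.
Set Implicit Arguments. Unset Strict Implicit. Unset Printing Implicit Defensive.
Import GRing.Theory.
Local Open Scope ring_scope.

(* Concrete model of the evaluations at V_n of the functors involved.
   V_n^{(x)d} has basis e_w = e_{w 0} (x) ... (x) e_{w (d-1)}, w : 'I_d -> 'I_n
   (positions and basis indices are 0-based). *)
Section Koszul.
Variables (K : fieldType) (q : K) (n d : nat).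

Definition tens := {ffun 'I_d -> 'I_n}.
Definition Vt := {ffun tens -> K^o}.

Definition ebase (w : tens) : Vt := [ffun u => (u == w)%:R].

Definition adj (p : nat) : option ('I_d * 'I_d) :=
  match (insub p : option 'I_d), (insub p.+1 : option 'I_d) with
  | Some i, Some j => Some (i, j)
  | _, _ => None
  end.

Definition swapw (i j : 'I_d) (w : tens) : tens := [ffun k => if k == i then w j else if k == j then w i else w k].

Definition Rbasis (p : nat) (w : tens) : Vt :=
  match adj p with
  | Some (i, j) =>
      if (w i < w j)%N then ebase (swapw i j w)
      else if w i == w j then q *: ebase w
      else (q - q^-1) *: ebase w + ebase (swapw i j w)
  | None => ebase w
  end.

(* the operator T_{p+1} on V_n^{(x)d}: R_n in positions p, p+1 *)
Definition Rat (p : nat) (v : Vt) : Vt := \sum_(w : tens) v w *: Rbasis p w.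

Fixpoint chain (i k : nat) (v : Vt) : Vt :=
  if k is k'.+1 then Rat i (chain i.+1 k' v) else v.

(* Lift to V_n^{(x)d} of kappa : K^i_d -> K^{i+1}_d: it is
   1_{V^{(x)i}} (x) sum over (1,d-i-1)-shuffles sigma of (-q^-1)^{l(sigma)} T_sigma
   acting on the last d-i factors (the shuffle of length k, moving the factor
   in Lambda-position k to the front, acts by T_1 T_2 ... T_k, T_k first),
   followed by the projection onto S^{i+1} (x) Lambda^{d-i-1}. *)
Definition kappa (i : nat) (v : Vt) : Vt :=
  \sum_(k < d - i) (- q^-1) ^+ k *: chain i k v.

(* relations of S^*_q: e_j e_i - q e_i e_j (i<j), in positions p, p+1 *)
Definition relS (p : nat) (w : tens) : Vt :=
  match adj p with
  | Some (i, j) => if (w i < w j)%N then ebase (swapw i j w) - q *: ebase w else 0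
  | None => 0
  end.

(* relations of Lambda^*_q: e_j/\e_i + q^-1 e_i/\e_j (i<j), e_i/\e_i *)
Definition relL (p : nat) (w : tens) : Vt :=
  match adj p with
  | Some (i, j) =>
      if (w i < w j)%N then ebase (swapw i j w) + q^-1 *: ebase w
      else if w i == w j then ebase w else 0
  | None => 0
  end.

(* Kernel of V^{(x)d} = V^{(x)i} (x) V^{(x)(d-i)} ->> S^i_q(n) (x) Lambda^{d-i}_q(n)
   = K^i_d(n): spanned by the S-relations inside the first i factors and the
   Lambda-relations inside the last d-i factors. *)
Definition Ucal (i : nat) : {vspace Vt} :=
  (<<[seq relS p w | p <- iota 0 i.-1, w <- enum tens]>>
   + <<[seq relL p w | p <- iota i (d - i).-1, w <- enum tens]>>)%VS.

Definition kappa_img (i : nat) : {vspace Vt} :=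
  <<[seq kappa i (ebase w) | w <- enum tens]>>%VS.

(* Exactness of the complex at K^i_d(n), expressed on representatives:
   ker (kappa : K^i -> K^{i+1}) = im (kappa : K^{i-1} -> K^i)  in K^i = V/Ucal i,
   with K^{-1} = K^{d+1} = 0. *)
Definition koszul_exact_at (i : nat) : Prop :=
  forall v : Vt,
    ((i < d)%N ==> (kappa i v \in Ucal i.+1)) =
    (v \in (if i is i'.+1 then kappa_img i' + Ucal i else Ucal i)%VS).

End Koszul.

From Pilot Require Import Defs.
From HB Require Import structures.
From mathcomp Require Import all_boot all_order all_algebra.
From mathcomp Require Import zify ring.
Set Implicit Arguments. Unset Strict Implicit. Unset Printing Implicit Defensive.
Import GRing.Theory.

(* Exactness is proved with an explicit contracting homotopy, working with
   representatives in [V_n^(x)d]. On a basis word [w], [homotopy j : K^j -> K^(j-1)]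
   vanishes if the smallest letter of [w] occurs in the Lambda-part, and otherwise moves
   the last occurrence of that letter in the S-part to the front of the Lambda-part.
   It preserves the relation subspaces [Ucal], and [kappa H + H kappa] is the identity
   modulo [Ucal]: for words whose Lambda-part is strictly increasing this is a direct
   computation with the shuffle sum, in which the S-relations commute the smallest letter
   into place; in general the Lambda-part is first straightened with the Lambda-relations,
   by induction on [weight]. That [kappa] is well defined and squares to zero follows from
   the Hecke and braid relations of the operators [R_p]. *)

(** * Words *)

Definition transp (p k : nat) : nat := if k == p then p.+1 else if k == p.+1 then p else k.
Definition rcyc (a b k : nat) : nat :=
  if (k < a) || (b < k) then k else if k == b then a else k.+1.
Definition lcyc (a b k : nat) : nat :=
  if (k < a) || (b < k) then k else if k == a then b else k.-1.

Ltac pos_arith := rewrite /transp /rcyc /lcyc; repeat case: ifP; lia.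

Lemma foldr_minn_le (m : nat) (s : seq nat) x : x \in s -> foldr minn m s <= x.
Proof.
elim: s => [//|y s IH]; rewrite in_cons /= => /orP [/eqP ->|hx]; first exact: geq_minl.
exact: leq_trans (geq_minr _ _) (IH hx).
Qed.

Lemma foldr_minn_mem (m : nat) (s : seq nat) : foldr minn m s = m \/ foldr minn m s \in s.
Proof.
elim: s => [|y s IH] /=; first by left.
rewrite /minn; case: ifP => _; first by right; rewrite mem_head.
by case: IH => [->|h]; [left | right; rewrite in_cons h orbT].
Qed.

Section Words.
Variables n d : nat.
Local Notation word := (tens n d).
Local Open Scope nat_scope.

(* Positions are natural numbers; [letter w k] is the junk value [0] when [k >= d]. *)
Definition letter (w : word) (k : nat) : nat :=
  if (insub k : option 'I_d) is Some t then w t else 0.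

Lemma letter_ord (w : word) (t : 'I_d) : letter w t = w t.
Proof. by rewrite /letter valK. Qed.

Lemma letter_lt (w : word) k : k < d -> letter w k < n.
Proof. by move=> hk; rewrite -[k]/(nat_of_ord (Ordinal hk)) letter_ord. Qed.

Lemma eq_word (w u : word) : (forall k, k < d -> letter w k = letter u k) -> w = u.
Proof. by move=> H; apply/ffunP => t; apply: ord_inj; rewrite -!letter_ord H. Qed.

Definition reorder (w : word) (f : nat -> nat) : word :=
  [ffun t : 'I_d => w (insubd t (f t))].

Lemma letter_reorder w f k : k < d -> f k < d -> letter (reorder w f) k = letter w (f k).
Proof.
move=> hk hf; pose t := Ordinal hk.
by rewrite -[k]/(nat_of_ord t) letter_ord ffunE -[in RHS](insubdK t hf) letter_ord.
Qed.

Definition swap_at (p : nat) (w : word) : word := reorder w (transp p).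

(* [move_right w a b] moves the letter at [a] to position [b], shifting the letters
   in between to the left; [move_left w a b] moves the letter at [b] to [a]. *)
Definition move_right (w : word) (a b : nat) : word := reorder w (rcyc a b).
Definition move_left (w : word) (a b : nat) : word := reorder w (lcyc a b).

Ltac word_eq :=
  rewrite /swap_at /move_right /move_left; apply: eq_word => ? ?;
  rewrite ?letter_reorder; try congr letter; pos_arith.

Lemma letter_swap p w k : p.+1 < d -> k < d -> letter (swap_at p w) k = letter w (transp p k).
Proof. by move=> hp hk; rewrite letter_reorder //; pos_arith. Qed.

Lemma letter_swap_fst p w : p.+1 < d -> letter (swap_at p w) p = letter w p.+1.
Proof. by move=> hp; rewrite letter_swap //; [pos_arith | lia]. Qed.

Lemma letter_swap_snd p w : p.+1 < d -> letter (swap_at p w) p.+1 = letter w p.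
Proof. by move=> hp; rewrite letter_swap //; pos_arith. Qed.

Lemma letter_swap_other p w k : p.+1 < d -> k < d -> k != p -> k != p.+1 ->
  letter (swap_at p w) k = letter w k.
Proof. by move=> hp hk h1 h2; rewrite letter_swap //; pos_arith. Qed.

Lemma swap_atK p w : p.+1 < d -> swap_at p (swap_at p w) = w.
Proof. by move=> hp; word_eq. Qed.

Lemma swap_at_comm p p' w : p.+2 <= p' -> p'.+1 < d ->
  swap_at p (swap_at p' w) = swap_at p' (swap_at p w).
Proof. by move=> h1 h2; word_eq. Qed.

Lemma swap_at_braid p w : p.+2 < d ->
  swap_at p (swap_at p.+1 (swap_at p w)) = swap_at p.+1 (swap_at p (swap_at p.+1 w)).
Proof. by move=> hp; word_eq. Qed.

Lemma adj_lt p : p.+1 < d ->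
  exists i j : 'I_d, [/\ adj d p = Some (i, j), val i = p & val j = p.+1].
Proof.
move=> hp; have hp0 : p < d by lia.
by exists (Ordinal hp0), (Ordinal hp); rewrite /adj !insubT.
Qed.

Lemma adj_ge p : d <= p.+1 -> adj d p = None.
Proof.
move=> hp; rewrite /adj.
have -> : (insub p.+1 : option 'I_d) = None by case: insubP => // u hu; lia.
by case: insub.
Qed.

Lemma swapwE (i j : 'I_d) p w : val i = p -> val j = p.+1 -> swapw i j w = swap_at p w.
Proof.
move=> hi hj; have hp : p.+1 < d by rewrite -hj ltn_ord.
apply: eq_word => k hk; rewrite letter_swap //.
rewrite -[k]/(nat_of_ord (Ordinal hk)) letter_ord ffunE.
case: (eqVneq (Ordinal hk) i) => [->|ni]; first by rewrite -letter_ord hj hi; pos_arith.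
case: (eqVneq (Ordinal hk) j) => [->|nj]; first by rewrite -letter_ord hj hi; pos_arith.
rewrite -letter_ord; congr letter; move: ni nj; rewrite -!(inj_eq val_inj) /= hi hj; pos_arith.
Qed.

Lemma letter_move_right w a b k : b < d -> k < d -> letter (move_right w a b) k = letter w (rcyc a b k).
Proof. by move=> hb hk; rewrite letter_reorder //; pos_arith. Qed.

Lemma letter_move_left w a b k : b < d -> k < d -> letter (move_left w a b) k = letter w (lcyc a b k).
Proof. by move=> hb hk; rewrite letter_reorder //; pos_arith. Qed.

Lemma move_right_id w a : a < d -> move_right w a a = w.
Proof. by move=> ha; word_eq. Qed.

Lemma move_left_id w a : a < d -> move_left w a a = w.
Proof. by move=> ha; word_eq. Qed.

Lemma swap_move_left w a b : a < b -> b < d -> swap_at a (move_left w a.+1 b) = move_left w a b.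
Proof. by move=> h1 h2; word_eq. Qed.

Lemma move_right_swap w a b : a < b -> b < d -> move_right (swap_at a w) a.+1 b = move_right w a b.
Proof. by move=> h1 h2; word_eq. Qed.

Lemma move_right_left w a i b : a <= i -> i < b -> b < d ->
  move_right (move_left w i.+1 b) a i.+1 = move_left (move_right w a i) i b.
Proof. by move=> h1 h2 h3; word_eq. Qed.

Lemma move_right_swap_out w p a b : a <= b -> b < d -> p.+1 < d -> (p.+1 < a) || (b < p) ->
  move_right (swap_at p w) a b = swap_at p (move_right w a b).
Proof. by move=> h1 h2 h3 h4; word_eq. Qed.

Lemma move_right_swap_in w p a b : a <= p -> p.+2 <= b -> b < d ->
  move_right (swap_at p.+1 w) a b = swap_at p (move_right w a b).
Proof. by move=> h1 h2 h3; word_eq. Qed.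

Definition minletter (w : word) : nat := foldr minn n [seq letter w k | k <- iota 0 d].

Lemma minletter_le w k : k < d -> minletter w <= letter w k.
Proof. by move=> hk; apply: foldr_minn_le; apply: map_f; rewrite mem_iota. Qed.

Lemma minletter_attained w : 0 < d -> exists2 k, k < d & letter w k = minletter w.
Proof.
move=> d_gt0; case: (foldr_minn_mem n [seq letter w k | k <- iota 0 d]) => [hn|].
  by move: (minletter_le w d_gt0) (letter_lt w d_gt0); rewrite [minletter w]hn; lia.
by case/mapP => k; rewrite mem_iota => hk hkE; exists k; [lia | rewrite -hkE].
Qed.

Lemma minletter_reorder w f : 0 < d -> (forall k, k < d -> f k < d) ->
  (forall k, k < d -> exists2 k', k' < d & f k' = k) -> minletter (reorder w f) = minletter w.
Proof.
move=> d_gt0 hf hs; apply/eqP; rewrite eqn_leq; apply/andP; split.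
- have [k hk <-] := minletter_attained w d_gt0; have [k' hk' <-] := hs k hk.
  by rewrite -letter_reorder ?hf //; apply: minletter_le.
- have [k hk <-] := minletter_attained (reorder w f) d_gt0.
  by rewrite letter_reorder ?hf //; apply: minletter_le; apply: hf.
Qed.

Lemma minletter_swap p w : p.+1 < d -> minletter (swap_at p w) = minletter w.
Proof.
move=> hp; apply: minletter_reorder; first lia; move=> k hk; first by pos_arith.
by exists (transp p k); pos_arith.
Qed.

Lemma minletter_move_left w a b : b < d -> minletter (move_left w a b) = minletter w.
Proof.
move=> hb; apply: minletter_reorder; first lia; move=> k hk; first by pos_arith.
by exists (rcyc a b k); pos_arith.
Qed.

Definition min_from (j : nat) (w : word) : bool :=
  has (fun k => letter w k == minletter w) (iota j (d - j)).

Lemma min_fromP j w : reflect (exists2 k, j <= k < d & letter w k = minletter w) (min_from j w).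
Proof.
apply: (iffP hasP) => [[k hk /eqP e]|[k hk e]]; exists k => //.
- by move: hk; rewrite mem_iota; lia.
- by rewrite mem_iota; lia.
- by rewrite e.
Qed.

Lemma minletter_lt_from j w k : ~~ min_from j w -> j <= k -> k < d -> minletter w < letter w k.
Proof.
move=> h h1 h2; rewrite ltn_neqAle minletter_le // andbT; apply/eqP => E.
by case/min_fromP: h; exists k => //; apply/andP.
Qed.

Lemma min_before j w : 0 < d -> ~~ min_from j w -> exists2 k, k < j & letter w k = minletter w.
Proof.
move=> d_gt0 h; have [k hk ek] := minletter_attained w d_gt0; exists k => //.
by case: (ltnP k j) => // hkj; case/min_fromP: h; exists k => //; lia.
Qed.

Fixpoint last_index (w : word) (s j : nat) : nat :=
  if j is j'.+1 then (if letter w j' == s then j' else last_index w s j') else 0.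

Lemma last_indexP w s j : (exists2 k, k < j & letter w k = s) ->
  [/\ last_index w s j < j, letter w (last_index w s j) = s &
      forall t, last_index w s j < t < j -> letter w t != s].
Proof.
elim: j => [[k //]|j IH] [k hk e] /=.
case: (eqVneq (letter w j) s) => [hj|hj]; first by split => // t ht; lia.
have hkj : k < j by move: hk; rewrite ltnS leq_eqVlt => /orP [/eqP ekj|//]; rewrite -ekj e eqxx in hj.
have [h1 h2 h3] := IH (ex_intro2 _ _ k hkj e).
split => //; first by lia.
by move=> t ht; case: (eqVneq t j) => [->//|htj]; apply: h3; lia.
Qed.

Lemma last_index_eq w s j a : a < j -> letter w a = s ->
  (forall t, a < t < j -> letter w t != s) -> last_index w s j = a.
Proof.
elim: j => [//|j IH] h1 h2 h3 /=.
case: (eqVneq (letter w j) s) => [hj|hj].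
  case: (ltnP a j) => ha; last by lia.
  by move: (h3 j); rewrite hj eqxx ha ltnSn => /(_ isT).
have ha : a != j by apply: contraNneq hj => <-; rewrite h2.
by apply: IH => [|//|t ht]; [lia | apply: h3; lia].
Qed.

Lemma eq_last_index w w' s j : (forall t, t < j -> letter w t = letter w' t) ->
  last_index w s j = last_index w' s j.
Proof. by elim: j => [//|j IH] H /=; rewrite H // IH // => t ht; apply: H; lia. Qed.

Definition lastmin (j : nat) (w : word) : nat := last_index w (minletter w) j.

Lemma lastminP j w : 0 < d -> ~~ min_from j w ->
  [/\ lastmin j w < j, letter w (lastmin j w) = minletter w &
      forall t, lastmin j w < t < j -> letter w t != minletter w].
Proof. by move=> d_gt0 h; apply: last_indexP; apply: min_before. Qed.

Lemma min_from_swap j p w : p.+1 < d -> (p.+1 < j) || (j <= p) ->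
  min_from j (swap_at p w) = min_from j w.
Proof.
move=> hp hj; apply/min_fromP/min_fromP => -[k hk ek]; rewrite minletter_swap // in ek *;
  exists (transp p k); try pos_arith.
- by rewrite -ek letter_swap //; lia.
- by rewrite -ek letter_swap; [congr letter; pos_arith | lia | pos_arith].
Qed.

Lemma lastmin_swap j p w : p.+1 < j -> j <= d -> ~~ min_from j w ->
  lastmin j w != p -> lastmin j w != p.+1 -> lastmin j (swap_at p w) = lastmin j w.
Proof.
move=> hp hj hw h1 h2; have [|ha1 ha2 ha3] := lastminP _ hw; first by lia.
rewrite [LHS]/lastmin minletter_swap; last by lia.
apply: last_index_eq => // [|t ht]; first by rewrite letter_swap_other //; lia.
rewrite letter_swap; [|lia|lia]; move: ht; rewrite /transp.
case: ifP => /eqP ht1 ht; first by apply: ha3; lia.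
case: ifP => /eqP ht2; last exact: ha3.
by subst t; apply: ha3; move: h1 => /eqP h1; lia.
Qed.

Lemma lastmin_swap_last j p w : p.+1 < j -> j <= d -> ~~ min_from j w ->
  lastmin j w = p -> lastmin j (swap_at p w) = p.+1.
Proof.
move=> hp hj hw ha; have [|ha1 ha2 ha3] := lastminP _ hw; first by lia.
rewrite [LHS]/lastmin minletter_swap; last by lia.
apply: last_index_eq => // [|t ht]; first by rewrite letter_swap_snd -?ha //; lia.
by rewrite letter_swap_other; [apply: ha3 | | | |]; lia.
Qed.

Lemma lastmin_swap_out j p w : j <= p -> p.+1 < d -> lastmin j (swap_at p w) = lastmin j w.
Proof.
move=> hj hp; rewrite /lastmin minletter_swap //.
by apply: eq_last_index => t ht; rewrite letter_swap_other //; lia.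
Qed.

Definition increasing_from (i : nat) (u : word) :=
  forall a b, i <= a -> a < b -> b < d -> letter u a < letter u b.

Lemma increasing_fromP i u :
  (forall p, i <= p -> p.+1 < d -> letter u p < letter u p.+1) -> increasing_from i u.
Proof.
move=> H a b ha hab hb; elim: b hab hb => [//|b IH] hab hb.
case: (eqVneq a b) => [->|hne]; first by apply: H; lia.
have : letter u a < letter u b by apply: IH; lia.
have : letter u b < letter u b.+1 by apply: H; lia.
lia.
Qed.

Lemma min_from_increasing i u : increasing_from i u -> min_from i u ->
  letter u i = minletter u.
Proof.
move=> hu /min_fromP [k /andP [hk1 hk2] ek]; case: (ltngtP i k) => hik; last by rewrite hik.
- by have := hu _ _ (leqnn i) hik hk2; have := minletter_le u (ltnW (leq_ltn_trans hik hk2)); lia.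
- by lia.
Qed.

Lemma min_from_move_left i b u : ~~ min_from i.+1 u -> i.+1 <= b < d ->
  ~~ min_from i.+2 (move_left u i.+1 b).
Proof.
move=> hw hb; apply/min_fromP => -[t ht]; rewrite minletter_move_left ?letter_move_left; try lia.
have hk1 : i.+1 <= lcyc i.+1 b t by pos_arith.
have hk2 : lcyc i.+1 b t < d by pos_arith.
by move=> et; move: (minletter_lt_from hw hk1 hk2); rewrite et ltnn.
Qed.

Lemma lastmin_move_left i b u : ~~ min_from i.+1 u -> i.+1 <= b < d ->
  lastmin i.+2 (move_left u i.+1 b) = lastmin i.+1 u.
Proof.
move=> hw hb; have [|ha1 ha2 ha3] := lastminP _ hw; first by lia.
rewrite [LHS]/lastmin minletter_move_left; last by lia.
apply: last_index_eq => [|//|t ht]; first by lia.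
  rewrite letter_move_left; [|lia|lia].
  by rewrite (_ : lcyc i.+1 b _ = lastmin i.+1 u); last pos_arith.
rewrite letter_move_left; [|lia|lia].
case: (ltnP t i.+1) => hti; first by rewrite (_ : lcyc _ _ t = t); [apply: ha3; lia | pos_arith].
rewrite (_ : lcyc _ _ t = b); last by pos_arith.
by rewrite neq_ltn (minletter_lt_from hw) ?orbT //; lia.
Qed.

Lemma increasing_move_right_min i u : 0 < d -> ~~ min_from i.+1 u -> increasing_from i.+1 u ->
  increasing_from i (move_right u (lastmin i.+1 u) i).
Proof.
move=> d_gt0 hw hu; have [ha1 ha2 ha3] := lastminP d_gt0 hw.
move=> x y hx hxy hy; rewrite !letter_move_right; try lia.
rewrite (_ : rcyc _ i y = y); last by pos_arith.
case: (eqVneq x i) => [->|hxi].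
  by rewrite (_ : rcyc _ i i = lastmin i.+1 u) ?ha2; [apply: (minletter_lt_from hw); lia | pos_arith].
by rewrite (_ : rcyc _ i x = x); [apply: hu; lia | move: hxi => /eqP; pos_arith].
Qed.

Definition weight (w : word) : nat := \sum_(0 <= k < d) (d - k) * letter w k.

Lemma weight_swap p w : p.+1 < d -> letter w p.+1 < letter w p ->
  weight (swap_at p w) < weight w.
Proof.
move=> hp hlt.
have split_at u : weight u = \sum_(0 <= k < p) (d - k) * letter u k +
    ((d - p) * letter u p + ((d - p.+1) * letter u p.+1 + \sum_(p.+2 <= k < d) (d - k) * letter u k)).
  rewrite /weight (@big_cat_nat _ _ _ p) //=; last by lia.
  by rewrite (@big_ltn _ _ _ p) //; [rewrite (@big_ltn _ _ _ p.+1) | lia].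
rewrite !split_at letter_swap_fst // letter_swap_snd //.
have E1 : \sum_(0 <= k < p) (d - k) * letter (swap_at p w) k = \sum_(0 <= k < p) (d - k) * letter w k.
  by apply: eq_big_nat => k hk; rewrite letter_swap_other //; lia.
have E2 : \sum_(p.+2 <= k < d) (d - k) * letter (swap_at p w) k = \sum_(p.+2 <= k < d) (d - k) * letter w k.
  by apply: eq_big_nat => k hk; rewrite letter_swap_other //; lia.
rewrite E1 E2.
have : (d - p) * letter w p.+1 + (d - p.+1) * letter w p < (d - p) * letter w p + (d - p.+1) * letter w p.+1.
  have -> : d - p = (d - p.+1).+1 by lia.
  nia.
lia.
Qed.

End Words.

Local Open Scope ring_scope.

Lemma sum_square_triangles (M : nmodType) (F : nat -> nat -> M) m :
  \sum_(0 <= k < m.+1) \sum_(0 <= j < m) F j k =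
  \sum_(0 <= j < m) \sum_(0 <= k < j.+1) (F j k + F k j.+1).
Proof.
elim: m => [|m IH]; first by rewrite [RHS]big_geq // big1 // => k _; rewrite big_geq.
have e1 : \sum_(0 <= k < m.+2) \sum_(0 <= j < m.+1) F j k =
    \sum_(0 <= k < m.+2) \sum_(0 <= j < m) F j k + \sum_(0 <= k < m.+2) F m k.
  by rewrite -big_split; apply: eq_bigr => k _; rewrite big_nat_recr.
have e2 : \sum_(0 <= k < m.+2) \sum_(0 <= j < m) F j k =
    \sum_(0 <= k < m.+1) \sum_(0 <= j < m) F j k + \sum_(0 <= j < m) F j m.+1.
  by rewrite big_nat_recr.
have e3 : \sum_(0 <= k < m.+1) (F m k + F k m.+1) =
    \sum_(0 <= k < m.+1) F m k + (\sum_(0 <= k < m) F k m.+1 + F m m.+1).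
  by rewrite big_split /= [X in _ + X]big_nat_recr.
rewrite e1 e2 [\sum_(0 <= k < m.+2) F m k]big_nat_recr //= [RHS]big_nat_recr //= e3 IH.
by rewrite -!addrA; congr (_ + _); rewrite addrCA.
Qed.

Lemma memv_sum_nat (K : fieldType) (vT : vectType K) (F : nat -> vT) (Y : {vspace vT}) a b :
  (forall k, (a <= k < b)%N -> F k \in Y) -> \sum_(a <= k < b) F k \in Y.
Proof. by move=> H; rewrite big_nat_cond; apply: memv_suml => k /andP [hk _]; apply: H. Qed.

Lemma linear_span_sub (K : fieldType) (vT wT : vectType K) (f : {linear vT -> wT})
    (Y : {vspace wT}) (s : seq vT) :
  {subset s <= [pred x | f x \in Y]} -> forall z, z \in <<s>>%VS -> f z \in Y.
Proof.
move=> H z hz; rewrite (coord_span (X := in_tuple s) hz) linear_sum.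
by apply: memv_suml => i _; rewrite linearZ; apply/memvZ/H/mem_nth.
Qed.

Section Vectors.
Variables (K : fieldType) (n d : nat).
Local Notation word := (tens n d).
Local Notation V := (Vt K n d).
Local Notation e := (@ebase K n d).

Lemma scale_regularE (a b : K) : a *: (b : K^o) = a * b.
Proof. by []. Qed.

Lemma ebaseE (w u : word) : e w u = (u == w)%:R.
Proof. by rewrite ffunE. Qed.

Lemma sum_delta (F : word -> K) (u : word) : \sum_(w : word) F w * (u == w)%:R = F u.
Proof.
rewrite (bigD1 u) //= eqxx mulr1 big1 ?addr0 // => w hw.
by rewrite eq_sym (negbTE hw) mulr0.
Qed.

Lemma ebase_decomp (v : V) : v = \sum_(w : word) v w *: e w.
Proof.
apply/ffunP => u; rewrite sum_ffunE -[LHS](sum_delta v u).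
by apply: eq_bigr => w _; rewrite ffunE ebaseE.
Qed.

Lemma linear_ebase_decomp (f : {linear V -> V}) (v : V) : f v = \sum_(w : word) v w *: f (e w).
Proof. by rewrite {1}(ebase_decomp v) linear_sum; apply: eq_bigr => w _; rewrite linearZ. Qed.

Lemma linear_ebase_mem (f : {linear V -> V}) (Y : {vspace V}) v :
  (forall w, f (e w) \in Y) -> f v \in Y.
Proof.
by move=> H; rewrite linear_ebase_decomp; apply: memv_suml => w _; apply/memvZ/H.
Qed.

End Vectors.

Ltac pointwise_field := apply/ffunP => ?; rewrite !ffunE ?scale_regularE; field.

Section KoszulComplex.
Variables (K : fieldType) (q : K) (n d : nat).
Local Notation word := (tens n d).
Local Notation V := (Vt K n d).
Local Notation e := (@ebase K n d).
Local Notation R := (@Defs.Rat K q n d).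
Local Notation chain := (@Defs.chain K q n d).
Local Notation kappa := (@Defs.kappa K q n d).

(** * The Hecke operators [R_p] and the differential *)

Definition Rdiag (x y : nat) : K := if (x < y)%N then 0 else if (y < x)%N then q - q^-1 else q.
Definition Roff (x y : nat) : K := if x == y then 0 else 1.

Lemma RbasisE p w : (p.+1 < d)%N ->
  Rbasis q p w = Rdiag (letter w p) (letter w p.+1) *: e w
               + Roff (letter w p) (letter w p.+1) *: e (swap_at p w).
Proof.
move=> hp; have [i [j [hadj hi hj]]] := adj_lt hp.
rewrite /Rbasis hadj (swapwE w hi hj) -hj -hi !letter_ord /Rdiag /Roff.
by rewrite -(inj_eq val_inj) /=; case: ltngtP => _; rewrite ?scale0r ?add0r ?addr0 ?scale1r.
Qed.

Lemma Rat_is_linear p : linear (R p).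
Proof.
move=> a x y; rewrite /Defs.Rat scaler_sumr -big_split /=; apply: eq_bigr => w _.
by rewrite !ffunE scalerDl scalerA.
Qed.
HB.instance Definition _ (p : nat) := GRing.isLinear.Build K V V *:%R (R p) (Rat_is_linear p).

Lemma Rat_ebase p w : R p (e w) = Rbasis q p w.
Proof.
rewrite /Defs.Rat (bigD1 w) //= ebaseE eqxx scale1r big1 ?addr0 // => u hu.
by rewrite ebaseE (negbTE hu) scale0r.
Qed.

Lemma Rat_ebase_lt p w : (p.+1 < d)%N -> (letter w p < letter w p.+1)%N ->
  R p (e w) = e (swap_at p w).
Proof. by move=> hp h; rewrite Rat_ebase RbasisE // /Rdiag /Roff h ltn_eqF // scale0r add0r scale1r. Qed.

Lemma Rat_ebase_eq p w : (p.+1 < d)%N -> letter w p = letter w p.+1 -> R p (e w) = q *: e w.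
Proof. by move=> hp h; rewrite Rat_ebase RbasisE // /Rdiag /Roff h ltnn eqxx scale0r addr0. Qed.

Lemma Rat_ge p v : (d <= p.+1)%N -> R p v = v.
Proof.
move=> hp; rewrite [RHS]ebase_decomp; apply: eq_bigr => w _.
by rewrite /Rbasis adj_ge.
Qed.

Lemma RatE p (v : V) u : (p.+1 < d)%N ->
  R p v u = Rdiag (letter u p) (letter u p.+1) * v u
          + Roff (letter u p) (letter u p.+1) * v (swap_at p u).
Proof.
move=> hp; rewrite /Defs.Rat sum_ffunE.
under eq_bigr => w _ do rewrite ffunE RbasisE // !ffunE !scale_regularE mulrDr !mulrA.
rewrite big_split /= sum_delta mulrC; congr (_ + _).
have swapE w : (u == swap_at p w) = (swap_at p u == w).
  by apply/eqP/eqP => [-> | <-]; rewrite swap_atK.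
under eq_bigr => w _ do rewrite swapE.
rewrite (sum_delta (fun w => v w * Roff (letter w p) (letter w p.+1))).
by rewrite letter_swap_fst // letter_swap_snd // /Roff eq_sym mulrC.
Qed.

Lemma Rat_comm p p' v : (p.+2 <= p')%N -> R p (R p' v) = R p' (R p v).
Proof.
move=> hpp; case: (ltnP p'.+1 d) => hp'; last by rewrite !(Rat_ge _ hp').
have hp : (p.+1 < d)%N by lia.
have fix_lo (u : word) k : (k <= p.+1)%N -> letter (swap_at p' u) k = letter u k.
  by move=> hk; apply: letter_swap_other; lia.
have fix_hi (u : word) k : (p' <= k <= p'.+1)%N -> letter (swap_at p u) k = letter u k.
  by move=> hk; apply: letter_swap_other; lia.
apply/ffunP => u; rewrite !RatE // (swap_at_comm _ hpp hp') !fix_lo ?fix_hi ?leqnn ?leqnSn //.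
ring.
Qed.

Hypothesis q_neq0 : q != 0.

Lemma Rat_quadratic p v : (p.+1 < d)%N -> R p (R p v) = (q - q^-1) *: R p v + v.
Proof.
move=> hp; apply/ffunP => u.
rewrite !RatE // !ffunE !scale_regularE !RatE // swap_atK // letter_swap_fst // letter_swap_snd //.
by rewrite /Rdiag /Roff; case: ltngtP => _ /=; field.
Qed.

Lemma Rat_braid p v : (p.+2 < d)%N -> R p (R p.+1 (R p v)) = R p.+1 (R p (R p.+1 v)).
Proof.
move=> hp1; have hp0 : (p.+1 < d)%N by lia.
have a0 (w : word) : letter (swap_at p w) p = letter w p.+1 := letter_swap_fst w hp0.
have b0 (w : word) : letter (swap_at p w) p.+1 = letter w p := letter_swap_snd w hp0.
have a1 (w : word) : letter (swap_at p.+1 w) p.+1 = letter w p.+2 := letter_swap_fst w hp1.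
have b1 (w : word) : letter (swap_at p.+1 w) p.+2 = letter w p.+1 := letter_swap_snd w hp1.
have c0 (w : word) : letter (swap_at p w) p.+2 = letter w p.+2 by apply: letter_swap_other; lia.
have c1 (w : word) : letter (swap_at p.+1 w) p = letter w p by apply: letter_swap_other; lia.
apply/ffunP => u; do 3 rewrite ?(RatE _ _ hp0) ?(RatE _ _ hp1).
rewrite !swap_atK // -(swap_at_braid _ hp1); do 3 rewrite ?a0 ?b0 ?c0 ?a1 ?b1 ?c1.
rewrite /Rdiag /Roff.
case: (ltngtP (letter u p) (letter u p.+1)) => h1;
  case: (ltngtP (letter u p.+1) (letter u p.+2)) => h2;
  case: (ltngtP (letter u p) (letter u p.+2)) => h3 /=; try lia; by field; rewrite ?q_neq0.
Qed.

Lemma chain_is_linear i k : linear (chain i k).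
Proof. by elim: k i => [|k IH] i a x y //=; rewrite IH linearP. Qed.
HB.instance Definition _ (i k : nat) :=
  GRing.isLinear.Build K V V *:%R (chain i k) (chain_is_linear i k).

Lemma chainSr i k v : chain i k.+1 v = chain i k (R (i + k) v).
Proof. by elim: k i => [|k IH] i; [rewrite addn0 | rewrite -addSnnS /= -IH]. Qed.

Lemma chain_Rat_comm i k x v : (x.+2 <= i)%N \/ (i + k < x)%N ->
  chain i k (R x v) = R x (chain i k v).
Proof.
elim: k i => [|k IH] i h //=; rewrite IH; last by lia.
by case: h => h; [rewrite (Rat_comm _ h) | rewrite Rat_comm //; lia].
Qed.

Lemma chain_Rat_braid i k x v : (i <= x)%N -> (x.+2 <= i + k)%N -> (i + k < d)%N ->
  chain i k (R x v) = R x.+1 (chain i k v).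
Proof.
elim: k i => [|k IH] i h1 h2 h3 /=; first by lia.
case: (eqVneq x i) => [->|hx].
- case: k IH h2 h3 => [|k] IH h2 h3 /=; first by lia.
  by rewrite chain_Rat_comm; [rewrite Rat_braid //; lia | lia].
- by rewrite IH; [rewrite Rat_comm //; lia | lia..].
Qed.

Lemma chain_chain b j k v : (k <= j)%N -> (b + j.+1 < d)%N ->
  chain b j.+1 (chain b k v) = chain b.+1 k (chain b j.+1 v).
Proof.
elim: k b j v => [|k IH] b j v h1 h2 //.
case: j h1 h2 => [|j] h1 h2; first by lia.
rewrite -[chain b k.+1 v]/(R b (chain b.+1 k v)) chain_Rat_braid; try lia.
rewrite -[chain b j.+2 _]/(R b (chain b.+1 j.+1 _)) IH; try lia.
by rewrite -chain_Rat_comm; [|lia].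
Qed.

Lemma kappaE i v : kappa i v = \sum_(0 <= k < d - i) (- q^-1) ^+ k *: chain i k v.
Proof. by rewrite /Defs.kappa big_mkord. Qed.

Lemma kappa_is_linear i : linear (kappa i).
Proof.
move=> a x y; rewrite !kappaE scaler_sumr -big_split /=; apply: eq_bigr => k _.
by rewrite linearP scalerDr !scalerA mulrC.
Qed.
HB.instance Definition _ (i : nat) :=
  GRing.isLinear.Build K V V *:%R (kappa i) (kappa_is_linear i).

Local Notation U i := (Ucal q n d i).

(** * The relation subspaces *)

Lemma relSE p (w : word) : (p.+1 < d)%N -> relS q p w =
  if (letter w p < letter w p.+1)%N then e (swap_at p w) - q *: e w else 0.
Proof.
move=> hp; have [i [j [hadj hi hj]]] := adj_lt hp.
by rewrite /relS hadj (swapwE w hi hj) -hj -hi !letter_ord.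
Qed.

Lemma relS_ge p (w : word) : (d <= p.+1)%N -> relS q p w = 0.
Proof. by move=> hp; rewrite /relS adj_ge. Qed.

Lemma relLE p (w : word) : (p.+1 < d)%N -> relL q p w =
  if (letter w p < letter w p.+1)%N then e (swap_at p w) + q^-1 *: e w
  else if letter w p == letter w p.+1 then e w else 0.
Proof.
move=> hp; have [i [j [hadj hi hj]]] := adj_lt hp.
by rewrite /relL hadj (swapwE w hi hj) -(inj_eq val_inj) -hj -hi !letter_ord.
Qed.

Lemma relS_Ucal p (w : word) i : (p.+2 <= i)%N -> relS q p w \in U i.
Proof.
move=> hp; apply/(subvP (addvSl _ _))/memv_span/allpairsP.
by exists (p, w); rewrite /= mem_iota mem_enum; split => //; lia.
Qed.

Lemma relL_Ucal p (w : word) i : (i <= p)%N -> (p.+2 <= d)%N -> relL q p w \in U i.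
Proof.
move=> h1 h2; apply/(subvP (addvSr _ _))/memv_span/allpairsP.
by exists (p, w); rewrite /= mem_iota mem_enum; split => //; lia.
Qed.

Lemma linear_Ucal_sub (f : {linear V -> V}) (Y : {vspace V}) i :
  (forall p (w : word), (p.+2 <= i)%N -> f (relS q p w) \in Y) ->
  (forall p (w : word), (i <= p)%N -> (p.+2 <= d)%N -> f (relL q p w) \in Y) ->
  forall z, z \in U i -> f z \in Y.
Proof.
move=> HS HL z /memv_addP [z1 h1 [z2 h2 ->]]; rewrite linearD; apply: memvD.
- apply: (linear_span_sub _ h1) => x /allpairsP [[p w] [/= hp _ ->]].
  by apply: HS; move: hp; rewrite mem_iota; lia.
- apply: (linear_span_sub _ h2) => x /allpairsP [[p w] [/= hp _ ->]].
  by apply: HL; move: hp; rewrite mem_iota; lia.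
Qed.

Lemma Rat_subq_Ucal i p x : (p.+1 < d)%N -> (p.+2 <= i)%N -> R p x - q *: x \in U i.
Proof.
move=> hp hi; rewrite -[_ - _]/((R p \- q \*: idfun) x).
apply: linear_ebase_mem => w /=.
rewrite Rat_ebase RbasisE // /Rdiag /Roff; case: ltngtP => h.
- rewrite scale0r add0r scale1r.
  have -> : e (swap_at p w) - q *: e w = relS q p w by rewrite relSE // h.
  exact: relS_Ucal.
- have -> : (q - q^-1) *: e w + 1 *: e (swap_at p w) - q *: e w = - q^-1 *: relS q p (swap_at p w).
    by rewrite relSE // letter_swap_fst // letter_swap_snd // h swap_atK //; pointwise_field.
  exact/memvZ/relS_Ucal.
- by rewrite scale0r addr0 subrr mem0v.
Qed.

Lemma Rat_addqV_Ucal i p x : (i <= p)%N -> (p.+2 <= d)%N -> R p x + q^-1 *: x \in U i.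
Proof.
move=> hi hp; rewrite -[_ + _]/((R p \+ q^-1 \*: idfun) x).
apply: linear_ebase_mem => w /=.
rewrite Rat_ebase RbasisE // /Rdiag /Roff; case: ltngtP => h.
- have -> : 0 *: e w + 1 *: e (swap_at p w) + q^-1 *: e w = relL q p w.
    by rewrite relLE // h; pointwise_field.
  exact: relL_Ucal.
- have -> : (q - q^-1) *: e w + 1 *: e (swap_at p w) + q^-1 *: e w = q *: relL q p (swap_at p w).
    by rewrite relLE // letter_swap_fst // letter_swap_snd // h swap_atK //; pointwise_field.
  exact/memvZ/relL_Ucal.
- have -> : q *: e w + 0 *: e (swap_at p w) + q^-1 *: e w = (q + q^-1) *: relL q p w.
    by rewrite relLE // h ltnn eqxx; pointwise_field.
  exact/memvZ/relL_Ucal.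
Qed.

Hypothesis q_add_inv_neq0 : q + q^-1 != 0.

Lemma linear_Ucal_sub_Rat (f : {linear V -> V}) (Y : {vspace V}) i :
  (forall p x, (p.+1 < d)%N -> (p.+2 <= i)%N -> f (R p x - q *: x) \in Y) ->
  (forall p x, (i <= p)%N -> (p.+2 <= d)%N -> f (R p x + q^-1 *: x) \in Y) ->
  forall z, z \in U i -> f z \in Y.
Proof.
move=> HS HL; apply: linear_Ucal_sub => p w.
- move=> hi; case: (ltnP p.+1 d) => hp; last by rewrite relS_ge // linear0 mem0v.
  rewrite relSE //; case: ifP => h; last by rewrite linear0 mem0v.
  by rewrite -Rat_ebase_lt //; apply: HS.
- move=> hi hp; rewrite relLE //; case: ifP => h; first by rewrite -Rat_ebase_lt //; apply: HL.
  case: ifP => /eqP h2; last by rewrite linear0 mem0v.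
  (* [R_p e_w = q e_w] for equal letters, and [q + q^-1] is invertible. *)
  have -> : e w = (q + q^-1)^-1 *: (R p (e w) + q^-1 *: e w).
    by rewrite Rat_ebase_eq // -scalerDl scalerA mulVf // scale1r.
  by rewrite linearZ; apply/memvZ/HL.
Qed.

Lemma Rat_eigen_addqV p x : (p.+1 < d)%N -> R p (R p x + q^-1 *: x) = q *: (R p x + q^-1 *: x).
Proof. by move=> hp; rewrite linearD linearZ /= Rat_quadratic //; pointwise_field. Qed.

Lemma kappa_Rat_comm i p y : (p.+2 <= i)%N -> kappa i (R p y) = R p (kappa i y).
Proof.
move=> hp; rewrite !kappaE linear_sum; apply: eq_bigr => k _.
by rewrite linearZ chain_Rat_comm //; left.
Qed.

Lemma kappa_Ucal i z : (i < d)%N -> z \in U i -> kappa i z \in U i.+1.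
Proof.
move=> hi; apply: linear_Ucal_sub_Rat => p x.
- move=> hp1 hp2; rewrite linearB linearZ /= kappa_Rat_comm //.
  by apply: Rat_subq_Ucal => //; lia.
- (* Split the shuffle sum at [r = p - i]: the terms [k < r] commute with [R_p] and
     the terms [k > r + 1] braid it into [R_(p+1)], giving Lambda-relations again;
     the terms [r] and [r + 1] cancel since [y] is a [q]-eigenvector of [R_p]. *)
  move=> h1 h2 /=; set y := R p x + q^-1 *: x.
  rewrite kappaE; set m := (d - i)%N; set r := (p - i)%N.
  rewrite (@big_cat_nat _ _ _ r) //=; last by lia.
  rewrite (@big_ltn _ _ _ r) //; last by lia.
  rewrite (@big_ltn _ _ _ r.+1) /m; last by lia.
  rewrite [X in _ + X]addrA; apply: memvD; last apply: memvD.
  + apply: memv_sum_nat => k hk; apply: memvZ.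
    rewrite /y linearD linearZ /= chain_Rat_comm; last by right; lia.
    by apply: Rat_addqV_Ucal; lia.
  + have -> : (- q^-1) ^+ r *: chain i r y + (- q^-1) ^+ r.+1 *: chain i r.+1 y = 0.
      rewrite chainSr (_ : (i + r = p)%N); last by rewrite /r; lia.
      rewrite /y Rat_eigen_addqV; last by lia.
      by rewrite linearZ scalerA -scalerDl exprS mulrAC mulNr mulVf // mulN1r addrN scale0r.
    exact: mem0v.
  + apply: memv_sum_nat => k hk; apply: memvZ.
    rewrite /y linearD linearZ /= chain_Rat_braid; try lia.
    by apply: Rat_addqV_Ucal; lia.
Qed.

Lemma kappa_kappa_Ucal i v : (i.+1 < d)%N -> kappa i.+1 (kappa i v) \in U i.+2.
Proof.
move=> hi; set m := (d - i.+1)%N; have hm : (d - i = m.+1)%N by rewrite /m; lia.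
rewrite [kappa i v]kappaE hm linear_sum.
under eq_bigr => k _ do rewrite linearZ /= kappaE -/m scaler_sumr.
under eq_bigr => k _ do under eq_bigr => j _ do rewrite scalerA.
(* The terms [(j, k)] and [(k, j + 1)] pair up into multiples of S-relations. *)
rewrite (sum_square_triangles (fun j k => ((- q^-1) ^+ k * (- q^-1) ^+ j) *: chain i.+1 j (chain i k v))).
apply: memv_sum_nat => j hj; apply: memv_sum_nat => k hk.
rewrite -chain_chain; [|lia..]; set P := chain i.+1 j (chain i k v).
have -> : (- q^-1) ^+ k * (- q^-1) ^+ j *: P + (- q^-1) ^+ j.+1 * (- q^-1) ^+ k *: R i P
   = (- q^-1 * ((- q^-1) ^+ k * (- q^-1) ^+ j)) *: (R i P - q *: P).
  by rewrite exprS; pointwise_field.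
by apply/memvZ/Rat_subq_Ucal; lia.
Qed.

(** * The contracting homotopy *)

(* Position [j-1] is the first Lambda-position of [K^(j-1)]; the power of [q^-1] is
   what commuting the letter there costs in [S_q], cf. [move_right_Ucal]. *)
Definition hbasis (j : nat) (w : word) : V :=
  if min_from j w then 0
  else (q^-1) ^+ (j.-1 - lastmin j w) *: e (move_right w (lastmin j w) j.-1).

Definition homotopy (j : nat) (v : V) : V := \sum_(w : word) v w *: hbasis j w.
Arguments homotopy : simpl never.

Lemma homotopy_is_linear j : linear (homotopy j).
Proof.
move=> a x y; rewrite /homotopy scaler_sumr -big_split /=; apply: eq_bigr => w _.
by rewrite !ffunE scalerDl scalerA.
Qed.
HB.instance Definition _ (j : nat) :=
  GRing.isLinear.Build K V V *:%R (homotopy j) (homotopy_is_linear j).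

Lemma homotopy_ebase j w : homotopy j (e w) = hbasis j w.
Proof.
rewrite /homotopy (bigD1 w) //= ebaseE eqxx scale1r big1 ?addr0 // => u hu.
by rewrite ebaseE (negbTE hu) scale0r.
Qed.

Lemma chain_increasing i k u : (i + k < d)%N -> increasing_from i u ->
  chain i k (e u) = e (move_left u i (i + k)).
Proof.
elim: k i => [|k IH] i h hu; first by rewrite addn0 move_left_id //; lia.
rewrite /= IH; [|lia|by move=> a b *; apply: hu; lia].
rewrite Rat_ebase_lt; [|lia|].
  by rewrite addSnnS swap_move_left //; lia.
rewrite !letter_move_left; try lia.
have -> : lcyc i.+1 (i.+1 + k) i = i by pos_arith.
have -> : lcyc i.+1 (i.+1 + k) i.+1 = i.+1 + k by pos_arith.
by apply: hu; lia.
Qed.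

Lemma kappa_increasing i u : increasing_from i u ->
  kappa i (e u) = \sum_(0 <= k < d - i) (- q^-1) ^+ k *: e (move_left u i (i + k)).
Proof.
move=> hu; rewrite kappaE big_nat_cond [RHS]big_nat_cond; apply: eq_bigr => k /andP [hk _].
by rewrite chain_increasing //; lia.
Qed.

Lemma swap_subq_Ucal i p u : (p.+2 <= i)%N -> (i <= d)%N -> (letter u p < letter u p.+1)%N ->
  e (swap_at p u) - q *: e u \in U i.
Proof.
move=> hi hid hlt; have hp : (p.+1 < d)%N by lia.
by rewrite -Rat_ebase_lt //; apply: Rat_subq_Ucal.
Qed.

(* In [S_q], [e_x e_y = q^-1 e_y e_x] for [x < y]. *)
Lemma move_right_Ucal i u a b : (a <= b)%N -> (b < i)%N -> (i <= d)%N ->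
  (forall t, (a < t <= b)%N -> (letter u a < letter u t)%N) ->
  e u - (q^-1) ^+ (b - a) *: e (move_right u a b) \in U i.
Proof.
move=> hab hbi hid; move Hm: (b - a)%N => m.
elim: m u a hab Hm => [|m IH] u a hab hm ht.
  have -> : a = b by lia.
  by rewrite move_right_id ?expr0 ?scale1r ?subrr ?mem0v //; lia.
have hlt : (letter u a < letter u a.+1)%N by apply: ht; lia.
have IH' : e (swap_at a u) - (q^-1) ^+ m *: e (move_right u a b) \in U i.
  rewrite -move_right_swap; [|lia|lia]; apply: IH => [||t htt]; try lia.
  by rewrite letter_swap_snd ?letter_swap_other; try lia; apply: ht; lia.
have -> : e u - (q^-1) ^+ m.+1 *: e (move_right u a b)
   = q^-1 *: (e (swap_at a u) - (q^-1) ^+ m *: e (move_right u a b))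
     - q^-1 *: (e (swap_at a u) - q *: e u).
  by rewrite exprS; pointwise_field.
by apply: memvB; apply: memvZ => //; apply: swap_subq_Ucal => //; lia.
Qed.

Lemma move_right_swap_subq_Ucal w p a b : (letter w p < letter w p.+1)%N ->
  (a <= b)%N -> (b < d)%N -> (p < b)%N -> a != p -> a != p.+1 ->
  e (move_right (swap_at p w) a b) - q *: e (move_right w a b) \in U b.
Proof.
move=> hlt hab hbd hpb /eqP h1 /eqP h2; case: (ltnP a p) => hap.
- case: p hlt hpb h1 h2 hap => [//|p] hlt hpb h1 h2 hap.
  rewrite move_right_swap_in; [|lia|lia|lia]; apply: swap_subq_Ucal; [lia|lia|].
  rewrite !letter_move_right; try lia.
  have -> : rcyc a b p = p.+1 by pos_arith.
  by have -> : rcyc a b p.+1 = p.+2 by pos_arith.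
- rewrite move_right_swap_out; [|lia|lia|lia|apply/orP; left; lia].
  apply: swap_subq_Ucal; [lia|lia|].
  rewrite !letter_move_right; try lia.
  have -> : rcyc a b p = p by pos_arith.
  by have -> : rcyc a b p.+1 = p.+1 by pos_arith.
Qed.

Lemma homotopy_relS_Ucal j p w : (p.+2 <= j)%N -> (j <= d)%N ->
  homotopy j (relS q p w) \in U j.-1.
Proof.
move=> hpj hjd; have hp : (p.+1 < d)%N by lia.
rewrite relSE //; case: ifP => hlt; last by rewrite linear0 mem0v.
rewrite linearB linearZ /= !homotopy_ebase /hbasis min_from_swap; [|lia|apply/orP; left; lia].
case: ifP => [_|/negbT hmin]; first by rewrite scaler0 subrr mem0v.
have [|ha1 ha2 ha3] := lastminP _ hmin; first by lia.
have hap1 : lastmin j w != p.+1.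
  by apply/eqP => E; move: (minletter_le w (ltnW hp)); rewrite -ha2 E; lia.
case: (eqVneq (lastmin j w) p) => hap.
- rewrite lastmin_swap_last // hap move_right_swap; [|lia|lia].
  have -> : (j.-1 - p = (j.-1 - p.+1).+1)%N by lia.
  by rewrite exprS scalerA mulrA mulfV // mul1r subrr mem0v.
- rewrite lastmin_swap // scalerA mulrC -scalerA -scalerBr.
  by apply/memvZ/move_right_swap_subq_Ucal => //; lia.
Qed.

Lemma homotopy_relL_Ucal j p w : (0 < j)%N -> (j <= p)%N -> (p.+2 <= d)%N ->
  homotopy j (relL q p w) \in U j.-1.
Proof.
move=> hj hjp hpd; have hp : (p.+1 < d)%N by lia.
have relL_moved a : (a <= j.-1)%N -> relL q p (move_right w a j.-1) \in U j.-1.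
  by move=> ha; apply: relL_Ucal; lia.
have letter_moved a k : (a <= j.-1)%N -> (j <= k < d)%N -> letter (move_right w a j.-1) k = letter w k.
  by move=> ha hk; rewrite letter_move_right; [congr letter; pos_arith | lia | lia].
rewrite relLE //; case: ifP => hlt.
- rewrite linearD linearZ /= !homotopy_ebase /hbasis min_from_swap; [|lia|apply/orP; right; lia].
  rewrite lastmin_swap_out //; case: ifP => [_|/negbT hmin]; first by rewrite scaler0 addr0 mem0v.
  have [|ha _ _] := lastminP _ hmin; first by lia.
  rewrite move_right_swap_out; [|lia|lia|lia|apply/orP; right; lia].
  rewrite scalerA mulrC -scalerA -scalerDr; apply/memvZ.
  suff <- : relL q p (move_right w (lastmin j w) j.-1) = e (swap_at p (move_right w (lastmin j w) j.-1))
      + q^-1 *: e (move_right w (lastmin j w) j.-1) by apply: relL_moved; lia.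
  by rewrite relLE // !letter_moved ?hlt //; lia.
- case: ifP => /eqP heq; last by rewrite linear0 mem0v.
  rewrite homotopy_ebase /hbasis; case: ifP => [_|/negbT hmin]; first exact: mem0v.
  have [|ha _ _] := lastminP _ hmin; first by lia.
  suff <- : relL q p (move_right w (lastmin j w) j.-1) = e (move_right w (lastmin j w) j.-1).
    by apply/memvZ/relL_moved; lia.
  by rewrite relLE // !letter_moved ?heq ?ltnn ?eqxx //; lia.
Qed.

Lemma homotopy_Ucal j z : (0 < j)%N -> (j <= d)%N -> z \in U j -> homotopy j z \in U j.-1.
Proof.
move=> hj hjd; apply: linear_Ucal_sub => p w hp.
  exact: homotopy_relS_Ucal.
by move=> hpd; apply: homotopy_relL_Ucal.
Qed.

Definition kappa_homotopy (i : nat) (v : V) : V :=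
  if i is i'.+1 then kappa i' (homotopy i v) else 0.

Lemma kappa_homotopy_is_linear i : linear (kappa_homotopy i).
Proof. by case: i => [|i] a x y /=; rewrite ?scaler0 ?addr0 // !linearP. Qed.
HB.instance Definition _ (i : nat) :=
  GRing.isLinear.Build K V V *:%R (kappa_homotopy i) (kappa_homotopy_is_linear i).

Definition defect (i : nat) (v : V) : V := v - kappa_homotopy i v - homotopy i.+1 (kappa i v).

Lemma defect_is_linear i : linear (defect i).
Proof. by move=> a x y; rewrite /defect !linearP /=; pointwise_field. Qed.
HB.instance Definition _ (i : nat) :=
  GRing.isLinear.Build K V V *:%R (defect i) (defect_is_linear i).

Lemma defect_Ucal_stable i z : (i < d)%N -> z \in U i -> defect i z \in U i.
Proof.
move=> hid hz; apply: memvB; first apply: memvB => //.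
- case: i hid hz => [|i] hid hz /=; first exact: mem0v.
  apply: kappa_Ucal; first by lia.
  by apply: homotopy_Ucal => //; lia.
- by apply: homotopy_Ucal => //; apply: kappa_Ucal.
Qed.

Lemma defect_min_from i u : (i < d)%N -> increasing_from i u -> min_from i u -> defect i (e u) = 0.
Proof.
move=> hid hu hmin; have hui := min_from_increasing hu hmin.
have hnot : ~~ min_from i.+1 u.
  by apply/min_fromP => -[k hk ek]; have := hu i k (leqnn i); lia.
have hlast : lastmin i.+1 u = i by apply: last_index_eq => // t; lia.
have KH0 : kappa_homotopy i (e u) = 0.
  by case: i {hid hu hui hnot hlast} hmin => //= i hmin; rewrite homotopy_ebase /hbasis hmin linear0.
rewrite /defect KH0 subr0 kappa_increasing // [homotopy _ _]linear_sum /= big_ltn; last by lia.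
rewrite addn0 move_left_id // linearZ /= homotopy_ebase /hbasis (negbTE hnot) hlast move_right_id //.
rewrite subnn !expr0 !scale1r big_nat_cond big1 ?addr0 ?subrr // => k /andP [/andP [hk1 hk2] _].
rewrite linearZ /= homotopy_ebase /hbasis.
suff -> : min_from i.+1 (move_left u i (i + k)) by rewrite scaler0.
apply/min_fromP; exists i.+1; first by lia.
rewrite letter_move_left ?minletter_move_left; try lia.
by rewrite (_ : lcyc i (i + k) i.+1 = i); last pos_arith.
Qed.

Lemma defect_not_min_from i u : (i.+1 < d)%N -> increasing_from i.+1 u -> ~~ min_from i.+1 u ->
  defect i.+1 (e u) = e u - (q^-1) ^+ (i - lastmin i.+1 u) *: e (move_right u (lastmin i.+1 u) i).
Proof.
move=> hid hu hmin; have [|ha1 ha2 ha3] := lastminP _ hmin; first by lia.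
have hsg := increasing_move_right_min (ltn_trans (ltn0Sn i) hid) hmin hu.
set a := lastmin i.+1 u in ha1 ha2 ha3 hsg *; set sg := move_right u a i in hsg *.
set X := (q^-1) ^+ (i - a); set c := - q^-1.
have Hk k : (k < d - i.+1)%N ->
    homotopy i.+2 (e (move_left u i.+1 (i.+1 + k))) = (q^-1 * X) *: e (move_left sg i (i.+1 + k)).
  move=> hk; rewrite homotopy_ebase /hbasis (negbTE (min_from_move_left _ _)); [|done|lia].
  rewrite lastmin_move_left; [|done|lia]; rewrite -/a /sg [i.+2.-1]/= move_right_left; [|lia|lia|lia].
  by rewrite (_ : (i.+1 - a = (i - a).+1)%N) ?exprS //; lia.
have S2 : homotopy i.+2 (kappa i.+1 (e u)) =
    - (X *: \sum_(0 <= k < d - i.+1) c ^+ k.+1 *: e (move_left sg i (i + k.+1))).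
  rewrite kappa_increasing // [homotopy _ _]linear_sum scaler_sumr -sumrN.
  apply: eq_big_nat => k hk; rewrite linearZ /= Hk; last by lia.
  by rewrite addnS -addSn exprS /c; pointwise_field.
rewrite /defect S2 /= homotopy_ebase /hbasis (negbTE hmin) -/a -/sg -/X linearZ /= kappa_increasing //.
rewrite (_ : (d - i = (d - i.+1).+1)%N); last by lia.
by rewrite big_nat_recl // addn0 move_left_id; [rewrite scalerDr expr0 scale1r opprD addrA opprK subrK | lia].
Qed.

Lemma defect_increasing i u : (i < d)%N -> increasing_from i u -> defect i (e u) \in U i.
Proof.
move=> hid hu; case: (boolP (min_from i u)) => hmin; first by rewrite defect_min_from // mem0v.
case: i hid hu hmin => [|i] hid hu hmin; first by have [k] := min_before hid hmin.
have [|ha1 ha2 ha3] := lastminP _ hmin; first by lia.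
rewrite defect_not_min_from //; apply: move_right_Ucal; try lia.
move=> t /andP [ht1 ht2]; rewrite ha2 ltn_neqAle minletter_le ?andbT; last by lia.
by rewrite eq_sym; apply: ha3; lia.
Qed.

Lemma defect_Ucal i v : (i < d)%N -> defect i v \in U i.
Proof.
move=> hid; apply: linear_ebase_mem => w.
have [N] := ubnP (weight w); elim: N w => // N IH w; rewrite ltnS => hw.
case: (boolP (all (fun p => letter w p < letter w p.+1)%N (iota i (d.-1 - i)))) => hall.
  apply: defect_increasing => //; apply: increasing_fromP => p h1 h2.
  by move/allP: hall; apply; rewrite mem_iota; lia.
case/allPn: hall => p; rewrite mem_iota => hp hle; have hpd : (p.+1 < d)%N by lia.
have relL_defect : defect i (relL q p _) \in U i by move=> u; apply/defect_Ucal_stable/relL_Ucal; lia.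
case: (ltngtP (letter w p) (letter w p.+1)) hle => // h _.
- have -> : e w = relL q p (swap_at p w) - q^-1 *: e (swap_at p w).
    by rewrite relLE // letter_swap_fst // letter_swap_snd // h swap_atK // addrK.
  rewrite linearB linearZ /=; apply: memvB; first exact: relL_defect.
  apply/memvZ/IH; have := weight_swap hpd h; lia.
- by rewrite (_ : e w = relL q p w); [exact: relL_defect | rewrite relLE // h ltnn eqxx].
Qed.

Lemma mem_kappa_img i x : kappa i x \in kappa_img q n d i.
Proof.
by apply: linear_ebase_mem => w; apply/memv_span/map_f; rewrite mem_enum.
Qed.

Lemma kappa_ker_sub i v : (i < d)%N -> kappa i v \in U i.+1 ->
  v \in (if i is i'.+1 then kappa_img q n d i' + U i else U i)%VS.
Proof.
move=> hid hk; have hv : v - kappa_homotopy i v \in U i.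
  rewrite -[_ - _](subrK (homotopy i.+1 (kappa i v))); apply: memvD; first exact: defect_Ucal.
  exact: homotopy_Ucal.
case: i hid hk hv => [|i] hid hk hv; first by rewrite subr0 in hv.
rewrite -(subrKC (kappa_homotopy i.+1 v) v); apply: memv_add => //; exact: mem_kappa_img.
Qed.

Lemma kappa_img_ker i v : (i.+1 < d)%N ->
  v \in (kappa_img q n d i + U i.+1)%VS -> kappa i.+1 v \in U i.+2.
Proof.
move=> hid /memv_addP [y hy [z hz ->]]; rewrite linearD; apply: memvD; last exact: kappa_Ucal.
by apply: (linear_span_sub _ hy) => x /mapP [w _ ->]; apply: kappa_kappa_Ucal.
Qed.

Theorem koszul_exact i : (0 < d)%N -> (i <= d)%N -> koszul_exact_at q n d i.
Proof.
move=> d_gt0 hid v; case: (ltnP i d) => hi /=.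
  apply/idP/idP; first exact: kappa_ker_sub.
  by case: i hid hi => [|i] hid hi; [exact: kappa_Ucal | exact: kappa_img_ker].
have -> : i = d.-1.+1 by lia.
apply/esym/(subvP (addvSl _ _)); rewrite -[v](_ : kappa d.-1 v = v) ?mem_kappa_img //.
by rewrite kappaE (_ : (d - d.-1 = 1)%N) ?big_nat1 ?expr0 ?scale1r //; lia.
Qed.

End KoszulComplex.

Lemma prim_root_odd_add_inv_neq0 (K : fieldType) (l : nat) (q : K) :
  odd l -> (1 < l)%N -> l.-primitive_root q -> q + q^-1 != 0.
Proof.
move=> hodd hl hprim; have q_neq0 : q != 0 by rewrite (prim_root_eq0 hprim); lia.
apply/eqP => hq; have hq2 : q ^+ 2 = -1.
  have : q ^+ 2 + 1 = q * (q + q^-1) by field.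
  by rewrite hq mulr0 => /eqP; rewrite addr_eq0 => /eqP.
have h4 : (l %| 4)%N by rewrite (prim_order_dvd hprim) (exprM q 2 2) hq2 sqrrN expr1n.
have := dvdn_leq (ltn0Sn 3) h4; move: h4 hodd hl; case: l {hprim} => [|[|[|[|[|l]]]]] //.
Qed.

Theorem proposition5p4 (K : fieldType) (l : nat) (q : K) :
  odd l -> (1 < l)%N -> l.-primitive_root q ->
  forall d : nat, (1 <= d)%N ->
  forall n : nat, forall i : nat, (i <= d)%N -> koszul_exact_at q n d i.
Proof.
move=> hodd hl hprim d hd n i hid.
have q_neq0 : q != 0 by rewrite (prim_root_eq0 hprim); lia.
exact: (koszul_exact q_neq0 (prim_root_odd_add_inv_neq0 hodd hl hprim) hd hid).
Qed.
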